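(* Let $P$ be a finite sequence of nonnegative integers. The following are equivalent: (i) $P$ is loop graphic; (ii) the pair $(P,P)$ is bigraphic; (iii) $P$ is mirror bigraphic.
   Context: An $l$-graph is a graph without multiple edges and with at most one loop attached at each vertex; the degree of a vertex is the number of edges incident with it, a loop contributing exactly one to the degree. A sequence $P$ is loop graphic if there is an $l$-graph whose vertex degrees are exactly the elements of $P$. For sequences $P,Q$ of nonnegative integers, the pair $(P,Q)$ is bigraphic if there is a bipartite graph $G=(V_1\cup V_2,E)$ (with stable sets $V_1,V_2$) whose vertices in $V_1$ have degrees equal to the elements of $P$ and whose vertices in $V_2$ have degrees equal to the elements of $Q$; such $G$ realizes $(P,Q)$. A bipartite graph $G=(V_1\cup V_2,E)$ is mirror if there is a bijection $\varphi:V_1\to V_2$ with $u\varphi(v)\in E \iff \varphi(u)v\in E$ for all $u,v\in V_1$. A sequence $P$ is mirror bigraphic if $(P,P)$ is bigraphic and some mirror bipartite graph realizes $(P,P)$. *)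

From mathcomp Require Import all_boot.
Set Implicit Arguments. Unset Strict Implicit. Unset Printing Implicit Defensive.

(* An l-graph on a finite vertex type T: a symmetric relation e, where
   e x x means there is a (single) loop at x.  No multiple edges. *)
Definition lgraph (T : finType) (e : rel T) : Prop := symmetric e.

(* Degree in an l-graph: number of vertices adjacent to x; a loop (x adjacent
   to itself) contributes exactly one. *)
Definition ldeg (T : finType) (e : rel T) (x : T) : nat := #|[set y | e x y]|.

Definition loop_graphic (P : seq nat) : Prop :=
  exists e : rel 'I_(size P), lgraph e /\ forall i, ldeg e i = nth 0 P i.

Definition deg1 (T1 T2 : finType) (b : T1 -> T2 -> bool) (u : T1) : nat :=
  #|[set v | b u v]|.
Definition deg2 (T1 T2 : finType) (b : T1 -> T2 -> bool) (v : T2) : nat :=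
  #|[set u | b u v]|.

Definition realizes (P Q : seq nat) (b : 'I_(size P) -> 'I_(size Q) -> bool)
  : Prop :=
  (forall u, deg1 b u = nth 0 P u) /\ (forall v, deg2 b v = nth 0 Q v).

Definition bigraphic (P Q : seq nat) : Prop :=
  exists b : 'I_(size P) -> 'I_(size Q) -> bool, realizes b.

Definition mirror (T1 T2 : finType) (b : T1 -> T2 -> bool) : Prop :=
  exists phi : T1 -> T2, bijective phi /\ forall u v, b u (phi v) = b v (phi u).

Definition mirror_bigraphic (P : seq nat) : Prop :=
  bigraphic P P /\
  exists b : 'I_(size P) -> 'I_(size P) -> bool, realizes b /\ mirror b.

From mathcomp Require Import all_boot.
Set Implicit Arguments. Unset Strict Implicit. Unset Printing Implicit Defensive.

(* The content is (ii) => (i): a 0/1 matrix M whose row sums and column sums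
   are both d can be made symmetric without changing these sums.  Fix a vertex
   x.  While row x and column x differ, there is v with M x v, ~ M v x and, the
   two sums being equal, u with M u x, ~ M x u.  If d v <= d u (otherwise
   transpose M), column u contains some y missing from column v, and the
   2-switch (x,v),(y,u) ~> (x,u),(y,v) keeps all sums while making the entries
   at u and v symmetric around x.  Once row x equals column x, delete x and
   induct on the number of vertices.  A symmetric realization is mirror through
   the identity, which gives (ii) => (iii). *)

Section Symmetrization.

Variable T : finType.
Implicit Types (A B C : {set T}) (M : rel T) (d : T -> nat).

Lemma card_exchange B C a b :
  a \in B -> a \notin C -> b \in C -> b \notin B ->
  (forall z, z != a -> z != b -> (z \in C) = (z \in B)) -> #|C| = #|B|.
Proof.
move=> aB aC bC bB eqBC.
have -> : C = b |: (B :\ a).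
  apply/setP=> z; rewrite !inE.
  have [->|zb] := eqVneq z b; first by rewrite bC.
  have [->|za] := eqVneq z a; first exact: negbTE.
  by rewrite eqBC.
by rewrite cardsU1 !inE (negbTE bB) andbF (cardsD1 a B) aB.
Qed.

Lemma exists_notin_of_card_le B C a :
  #|B| <= #|C| -> a \in B -> a \notin C -> exists2 b, b \in C & b \notin B.
Proof.
move=> le_BC aB aC; apply/subsetPn; apply: contraL le_BC => sub.
by rewrite -ltnNge proper_card // properE sub; apply/subsetPn; exists a.
Qed.

Definition transpose M : rel T := fun a b => M b a.

Definition outdeg A M u := #|[set v in A | M u v]|.

Definition has_degrees A d M :=
  {in A, outdeg A M =1 d} /\ {in A, outdeg A (transpose M) =1 d}.

Definition asym_nbhd A M x := [set w in A | M x w != M w x].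

Lemma has_degrees_transpose A d M :
  has_degrees A d M -> has_degrees A d (transpose M).
Proof. by case=> hr hc; split. Qed.

Lemma asym_nbhd_transpose A M x : asym_nbhd A (transpose M) x = asym_nbhd A M x.
Proof. by apply/setP=> w; rewrite !inE eq_sym. Qed.

Lemma outdeg_setD1 A M x u :
  x \in A -> outdeg A M u = M u x + outdeg (A :\ x) M u.
Proof.
move=> xA; rewrite /outdeg (cardsD1 x [set v in A | M u v]) !inE xA /=.
by congr (_ + _); apply: eq_card => v; rewrite !inE andbA.
Qed.

Definition switch M u1 u2 v1 v2 : rel T := fun s t =>
  if [&& s == u1 & t == v1] || [&& s == u2 & t == v2] then false
  else if [&& s == u1 & t == v2] || [&& s == u2 & t == v1] then true
  else M s t.

Lemma outdeg_switch A M u1 u2 v1 v2 u :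
  v1 \in A -> v2 \in A -> M u1 v1 -> M u2 v2 -> ~~ M u1 v2 -> ~~ M u2 v1 ->
  outdeg A (switch M u1 u2 v1 v2) u = outdeg A M u.
Proof.
move=> v1A v2A M11 M22 M12 M21.
have u12 : (u1 == u2) = false by apply: contraNF M21 => /eqP <-.
have v12 : (v1 == v2) = false by apply: contraNF M12 => /eqP <-.
have u21 : (u2 == u1) = false by rewrite eq_sym.
have v21 : (v2 == v1) = false by rewrite eq_sym.
rewrite /outdeg /switch; have [->|uu1] := eqVneq u u1.
  apply: (card_exchange (a := v1) (b := v2));
    rewrite ?inE ?eqxx ?u12 ?v12 ?v21 ?v1A ?v2A ?M11 ?(negbTE M12) //= ?andbF //.
  by move=> z /negbTE zv1 /negbTE zv2; rewrite !inE zv1 zv2 ?andbF.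
have [->|uu2] := eqVneq u u2.
  apply: (card_exchange (a := v2) (b := v1));
    rewrite ?inE ?eqxx ?u21 ?v12 ?v21 ?v1A ?v2A ?M22 ?(negbTE M21) //= ?andbF //.
  by move=> z /negbTE zv2 /negbTE zv1; rewrite !inE zv1 zv2 ?andbF.
by apply: eq_card => z; rewrite !inE.
Qed.

Lemma transpose_switch M u1 u2 v1 v2 :
  transpose (switch M u1 u2 v1 v2) =2 switch (transpose M) v1 v2 u1 u2.
Proof.
move=> s t; rewrite /transpose /switch.
by case: (s == v1); case: (s == v2); case: (t == u1); case: (t == u2).
Qed.

Lemma has_degrees_switch A d M u1 u2 v1 v2 :
  u1 \in A -> u2 \in A -> v1 \in A -> v2 \in A ->
  M u1 v1 -> M u2 v2 -> ~~ M u1 v2 -> ~~ M u2 v1 ->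
  has_degrees A d M -> has_degrees A d (switch M u1 u2 v1 v2).
Proof.
move=> u1A u2A v1A v2A M11 M22 M12 M21 [hr hc]; split=> u uA.
  by rewrite outdeg_switch ?hr.
rewrite -(hc u uA) -(outdeg_switch (M := transpose M) u u1A u2A M11 M22 M21 M12).
by apply: eq_card => v; rewrite !inE transpose_switch.
Qed.

Definition asym_reducible A d M x :=
  exists2 M', has_degrees A d M' & asym_nbhd A M' x \proper asym_nbhd A M x.

Lemma asym_reducible_transpose A d M x :
  asym_reducible A d (transpose M) x -> asym_reducible A d M x.
Proof.
case=> M' hM' ltM'; exists (transpose M'); first exact: has_degrees_transpose.
by rewrite asym_nbhd_transpose -(asym_nbhd_transpose A M).
Qed.

Lemma asym_reducible_switch A d M x u v :
  has_degrees A d M -> x \in A -> u \in A -> v \in A ->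
  M x v -> ~~ M v x -> M u x -> ~~ M x u -> d v <= d u -> asym_reducible A d M x.
Proof.
move=> hM xA uA vA xv vx ux xu le_vu; have [_ hc] := hM.
have [y] : exists2 y, y \in [set w in A | M w u] & y \notin [set w in A | M w v].
  apply: (exists_notin_of_card_le (a := x)); last by rewrite !inE (negbTE xu) andbF.
    by move: (hc v vA) (hc u uA); rewrite /outdeg => -> ->.
  by rewrite !inE xA.
rewrite !inE => /andP[yA yu]; rewrite yA /= => yv.
have xv' : (x == v) = false by apply/eqP=> exv; move: xv vx; rewrite exv => ->.
have xu' : (x == u) = false by apply/eqP=> exu; move: ux xu; rewrite exu => ->.
have xy : (x == y) = false by apply: contraNF xu => /eqP->.
have uv : (u == v) = false by apply: contraNF vx => /eqP<-.
exists (switch M x y v u); first exact: has_degrees_switch.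
have col_x w : switch M x y v u w x = M w x by rewrite /switch xv' xu' !andbF.
apply/properP; split.
  apply/subsetP=> w; rewrite !inE col_x /switch eqxx xy /= !orbF => /andP[-> ].
  have [->|wv] := eqVneq w v; first by rewrite xv (negbTE vx).
  by have [->|wu] := eqVneq w u; first by rewrite ux (negbTE xu).
exists u; first by rewrite !inE uA ux (negbTE xu).
by rewrite !inE col_x /switch !eqxx xy uv /= ux andbF.
Qed.

Lemma asym_reducible_mem A d M x w :
  has_degrees A d M -> x \in A -> w \in asym_nbhd A M x -> asym_reducible A d M x.
Proof.
move=> hM xA; rewrite inE => /andP[wA].
wlog xw : M hM / M x w => [red|].
  move=> neq; case/boolP: (M x w) => xw; first exact: red hM xw neq.
  apply: asym_reducible_transpose; apply: red (has_degrees_transpose hM) _ _.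
    by move: neq; rewrite /transpose (negbTE xw); case: (M w x).
  by rewrite /transpose eq_sym.
rewrite xw; case wx: (M w x) => // _; have [hr hc] := hM.
have [u] : exists2 u, u \in [set t in A | M t x] & u \notin [set t in A | M x t].
  apply: (exists_notin_of_card_le (a := w)); last by rewrite !inE wx andbF.
    by move: (hr x xA) (hc x xA); rewrite /outdeg => -> ->.
  by rewrite !inE wA.
rewrite !inE => /andP[uA ux]; rewrite uA /= => xu.
have [le_wu|/ltnW le_uw] := leqP (d w) (d u).
  exact: (asym_reducible_switch hM xA uA wA xw (negbT wx) ux xu).
apply: asym_reducible_transpose.
exact: (asym_reducible_switch (has_degrees_transpose hM) xA wA uA ux xu xw (negbT wx)).
Qed.

Lemma symmetrize_at A d M x :
  has_degrees A d M -> x \in A ->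
  exists2 M', has_degrees A d M' & {in A, forall w, M' x w = M' w x}.
Proof.
move=> hM xA; have [n] := ubnP #|asym_nbhd A M x|.
elim: n M hM => // n IH M hM lt_asym.
have [asym0|[w wM]] := set_0Vmem (asym_nbhd A M x).
  exists M => // w wA; apply/eqP/negbFE.
  by have := congr1 (fun B => w \in B) asym0; rewrite !inE wA.
have [M' hM' ltM'] := asym_reducible_mem hM xA wM.
exact: IH hM' (leq_trans (proper_card ltM') lt_asym).
Qed.

Lemma has_degrees_setD1 A d M x :
  has_degrees A d M -> x \in A -> {in A, forall w, M x w = M w x} ->
  has_degrees (A :\ x) (fun u => d u - M u x) M.
Proof.
move=> [hr hc] xA symx; split=> u; rewrite inE => /andP[_ uA].
  by rewrite -(hr u uA) (outdeg_setD1 _ _ xA) addKn.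
rewrite -(hc u uA) (outdeg_setD1 _ _ xA).
by have -> : transpose M u x = M u x := symx u uA; rewrite addKn.
Qed.

Lemma symmetric_of_has_degrees A d M :
  has_degrees A d M -> exists2 e : rel T, symmetric e & {in A, outdeg A e =1 d}.
Proof.
have [n] := ubnP #|A|; elim: n A d M => // n IH A d M lt_A hM.
have [A0|[x xA]] := set_0Vmem A.
  by exists (fun _ _ => false) => // u; rewrite A0 inE.
have [M' hM' symx] := symmetrize_at hM xA.
have [|e' e'sym e'deg] := IH _ _ _ _ (has_degrees_setD1 hM' xA symx).
  by move: lt_A; rewrite (cardsD1 x) xA add1n ltnS.
pose e : rel T := fun a b =>
  if a == x then M' x b else if b == x then M' x a else e' a b.
exists e => [a b|u uA].
  rewrite /e; have [->|_] := eqVneq a x; first by case: eqP => [->|].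
  by case: (b == x).
have [hr _] := hM'; have [->|ux] := eqVneq u x.
  by rewrite -(hr x xA); apply: eq_card => v; rewrite !inE /e eqxx.
rewrite (outdeg_setD1 _ _ xA).
have -> : outdeg (A :\ x) e u = outdeg (A :\ x) e' u.
  by apply: eq_card => v; rewrite !inE /e (negbTE ux); case: (v == x).
rewrite e'deg; last by rewrite !inE ux.
have -> : e u x = M' u x by rewrite /e (negbTE ux) eqxx symx.
by rewrite subnKC // -(hr u uA) (outdeg_setD1 _ _ xA) leq_addr.
Qed.

End Symmetrization.

Lemma loop_graphic_of_bigraphic P : bigraphic P P -> loop_graphic P.
Proof.
case=> b [deg1b deg2b].
have hb : has_degrees [set: 'I_(size P)] (fun i => nth 0 P i) b.
  split=> u _; [rewrite -deg1b | rewrite -deg2b];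
  by apply: eq_card => v; rewrite !inE.
have [e esym edeg] := symmetric_of_has_degrees hb; exists e; split=> // i.
by rewrite -edeg ?inE //; apply: eq_card => v; rewrite !inE.
Qed.

Lemma realizes_symmetric P (e : rel 'I_(size P)) :
  symmetric e -> (forall i, ldeg e i = nth 0 P i) -> realizes e.
Proof.
move=> esym edeg; split=> // v.
by rewrite -edeg; apply: eq_card => u; rewrite !inE esym.
Qed.

Lemma mirror_symmetric (T : finType) (e : rel T) : symmetric e -> mirror e.
Proof. by move=> esym; exists id; split=> [|u v]; [exists id | exact: esym]. Qed.

Lemma mirror_bigraphic_of_bigraphic P : bigraphic P P -> mirror_bigraphic P.
Proof.
move=> bP; have [e [esym edeg]] := loop_graphic_of_bigraphic bP.
by split=> //; exists e; split; [apply: realizes_symmetric | apply: mirror_symmetric].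
Qed.

Theorem theorem3 (P : seq nat) :
  (loop_graphic P <-> bigraphic P P) /\ (bigraphic P P <-> mirror_bigraphic P).
Proof.
split; split.
- by case=> e [esym edeg]; exists e; apply: realizes_symmetric.
- exact: loop_graphic_of_bigraphic.
- exact: mirror_bigraphic_of_bigraphic.
- by case.
Qed.
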